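(* Let $\mathfrak g$ be a finite-dimensional real Lie algebra whose commutator ideal $[\mathfrak g,\mathfrak g]$ is one-dimensional. Then every complex structure on $\mathfrak g$ is abelian.
   Context: A complex structure on a real Lie algebra $\mathfrak g$ is a linear map $J$ with $J^2=-\mathrm{Id}$ and $J[x,y]-[Jx,y]-[x,Jy]-J[Jx,Jy]=0$ for all $x,y$; it is abelian if $[Jx,Jy]=[x,y]$ for all $x,y$. *)

From HB Require Import structures.
From mathcomp Require Import all_boot all_order all_algebra.
From mathcomp Require Import reals.
Set Implicit Arguments. Unset Strict Implicit. Unset Printing Implicit Defensive.
Import Order.TTheory GRing.Theory Num.Theory.
Local Open Scope ring_scope.

Definition is_lie_bracket (R : realType) (V : vectType R) (br : V -> V -> V) : Prop :=
  [/\ (forall (a : R) (x y z : V), br (a *: x + y) z = a *: br x z + br y z),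
      (forall (a : R) (x y z : V), br x (a *: y + z) = a *: br x y + br x z),
      (forall x : V, br x x = 0) &
      (forall x y z : V, br x (br y z) + br y (br z x) + br z (br x y) = 0)].

Definition is_commutator_ideal (R : realType) (V : vectType R)
  (br : V -> V -> V) (U : {vspace V}) : Prop :=
  (forall x y : V, br x y \in U) /\
  (forall W : {vspace V}, (forall x y : V, br x y \in W) -> (U <= W)%VS).

Definition is_complex_structure (R : realType) (V : vectType R)
  (br : V -> V -> V) (J : 'End(V)) : Prop :=
  (forall x : V, J (J x) = - x) /\
  (forall x y : V, J (br x y) - br (J x) y - br x (J y) - J (br (J x) (J y)) = 0).

Definition is_abelian_complex_structure (R : realType) (V : vectType R)
  (br : V -> V -> V) (J : 'End(V)) : Prop :=
  forall x y : V, br (J x) (J y) = br x y.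

From HB Require Import structures.
From mathcomp Require Import all_boot all_order all_algebra.
From mathcomp Require Import reals.
Set Implicit Arguments. Unset Strict Implicit. Unset Printing Implicit Defensive.
Import Order.TTheory GRing.Theory Num.Theory.
Local Open Scope ring_scope.

(* Put [d := [x,y] - [Jx,Jy]]; the vanishing of
   the Nijenhuis tensor says [J d = [Jx,y] + [x,Jy]], so both [d] and [J d] lie
   on [R z].  Since [J^2 = -1] has no real eigenvalue, [J z] is not on [R z],
   which forces [d = 0]. *)

Section ComplexStructureLines.

Variables (R : realFieldType) (V : vectType R) (J : 'End(V)).
Hypothesis JJ : forall x : V, J (J x) = - x.

Lemma sqrN1_eigenvector0 (a : R) (z : V) : J z = a *: z -> z = 0.
Proof.
move=> Jz; have := JJ z; rewrite Jz linearZ /= Jz scalerA => /eqP.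
rewrite -subr_eq0 opprK -{2}[z]scale1r -scalerDl scaler_eq0 => /orP[|/eqP //].
by rewrite -expr2 gt_eqF // ltr_wpDl ?sqr_ge0.
Qed.

Lemma sqrN1_vline_stable0 (z d : V) :
  z != 0 -> d \in <[z]>%VS -> J d \in <[z]>%VS -> d = 0.
Proof.
move=> z_neq0 /vlineP[c ->] /vlineP[e]; rewrite linearZ /=.
have [-> _|c_neq0 Jcz] := eqVneq c 0; first by rewrite scale0r.
have Jz : J z = (e / c) *: z by rewrite mulrC -scalerA -Jcz scalerA mulVf ?scale1r.
by rewrite (sqrN1_eigenvector0 Jz) eqxx in z_neq0.
Qed.

End ComplexStructureLines.

Lemma dimv1_vline (R : fieldType) (V : vectType R) (U : {vspace V}) :
  \dim U = 1%N -> vpick U != 0 /\ U = <[vpick U]>%VS.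
Proof.
move=> dimU1; have U_neq0 : U != 0%VS by apply/eqP => U0; rewrite U0 dimv0 in dimU1.
have z_neq0 : vpick U != 0 by rewrite vpick0.
split=> //; apply/eqP; rewrite eq_sym eqEdim dim_vline z_neq0 dimU1 leqnn andbT.
by rewrite -memvE memv_pick.
Qed.

Lemma complex_structure_abelian_of_vline (R : realType) (V : vectType R)
    (br : V -> V -> V) (J : 'End(V)) (z : V) :
  z != 0 -> (forall x y, br x y \in <[z]>%VS) ->
  is_complex_structure br J -> is_abelian_complex_structure br J.
Proof.
move=> z_neq0 br_line [JJ nijenhuis] x y; apply/eqP; rewrite eq_sym -subr_eq0.
set d := br x y - br (J x) (J y).
have Jd : J d = br (J x) y + br x (J y).
  apply/eqP; rewrite -subr_eq0 linearB /= -(nijenhuis x y) opprD !addrA.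
  by rewrite !(addrAC _ (- J (br (J x) (J y)))).
apply/eqP; apply: (sqrN1_vline_stable0 JJ z_neq0); first by rewrite memvB.
by rewrite Jd memvD.
Qed.

Theorem mainTheorem8 (R : realType) (V : vectType R) (br : V -> V -> V)
  (Hlie : is_lie_bracket br)
  (Hdim : exists U : {vspace V}, is_commutator_ideal br U /\ \dim U = 1%N)
  (J : 'End(V)) (HJ : is_complex_structure br J) :
  is_abelian_complex_structure br J.
Proof.
case: Hdim => U [[br_in_U _] /dimv1_vline[z_neq0 U_line]].
by apply: (complex_structure_abelian_of_vline z_neq0) HJ => x y; rewrite -U_line.
Qed.
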